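(* Let $T$ be a skew-nontrivial tree and let $S\subseteq W^{\emptyset}_-(T)$. Then $S$ is a PSD forcing set of $SD_2(T)$ if and only if $S$ is a skew forcing set of $T$.
   Context: Skew forcing: vertices are colored blue or white; if any vertex $u$ (blue or white) has exactly one white neighbor $v$, then $u$ may force $v$ to become blue; a skew forcing set is a set of initially blue vertices from which repeated forcing turns all vertices blue. PSD forcing: if $B$ is the current blue set, $C$ a component of $G-B$, and $u$ a blue vertex with $N_G(u)\cap V(C)=\{v\}$, then $u$ may force $v$; a PSD forcing set is defined analogously. $B^{\emptyset}_-(T)$ is the set of vertices that become blue when the skew forcing rule is applied starting from the empty set until no more forces are possible, and $W^{\emptyset}_-(T)=V(T)\setminus B^{\emptyset}_-(T)$. The skew-nontrivial subgraph $\check G$ of $G$ is obtained by computing $B^{\emptyset}_-(G)$, then deleting each vertex of $B^{\emptyset}_-(G)$ all of whose neighbors are in $B^{\emptyset}_-(G)$, and deleting each edge with both endpoints in $B^{\emptyset}_-(G)$; $T$ is skew-nontrivial if $\check T=T$. The special distance-2 graph $SD_2(T)$ has vertex set $W^{\emptyset}_-(T)$, with $u,w$ adjacent iff $u\ne w$ and $N_T(u)\cap N_T(w)\neq\emptyset$. *)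

From mathcomp Require Import all_boot.
Set Warnings "-notation-overridden".
Set Implicit Arguments. Unset Strict Implicit. Unset Printing Implicit Defensive.

Definition simple_graph (T : finType) (e : rel T) := symmetric e /\ irreflexive e.

Definition is_tree (T : finType) (e : rel T) :=
  [/\ simple_graph e, 0 < #|T|, (forall x y, connect e x y) &
      (forall c : seq T, 3 <= size c -> ~~ (cycle e c && uniq c))].

Inductive reach (T : finType) (step : {set T} -> {set T} -> Prop)
  : {set T} -> {set T} -> Prop :=
| reach_refl B : reach step B B
| reach_cons B B' B'' : step B B' -> reach step B' B'' -> reach step B B''.

Definition skew_force (T : finType) (e : rel T) (B : {set T}) (u v : T) :=
  [set w | e u w & w \notin B] == [set v].
Definition skew_step (T : finType) (e : rel T) (B B' : {set T}) :=
  exists u v, skew_force e B u v /\ B' = v |: B.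
Definition skew_forcing_set (T : finType) (e : rel T) (S : {set T}) :=
  reach (skew_step e) S setT.

(* B0 is the set B^0_-(G): the set of blue vertices obtained by applying the
   skew forcing rule starting from the empty set until no more forces are
   possible. *)
Definition skew_final (T : finType) (e : rel T) (B0 : {set T}) :=
  reach (skew_step e) set0 B0 /\ (forall u v, ~ skew_force e B0 u v).

Definition skew_nontrivial (T : finType) (e : rel T) (B0 : {set T}) :=
  (forall v, v \in B0 -> ~~ [forall w, e v w ==> (w \in B0)]) /\
  (forall u v, e u v -> ~~ ((u \in B0) && (v \in B0))).

(* PSD forcing: w is in the component of G - B containing the white vertex v. *)
Definition white_conn (T : finType) (e : rel T) (B : {set T}) :=
  connect (fun x y => [&& e x y, x \notin B & y \notin B]).
Definition psd_force (T : finType) (e : rel T) (B : {set T}) (u v : T) :=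
  [&& u \in B, v \notin B &
      [set w | [&& e u w, w \notin B & white_conn e B v w]] == [set v]].
Definition psd_step (T : finType) (e : rel T) (B B' : {set T}) :=
  exists u v, psd_force e B u v /\ B' = v |: B.
Definition psd_forcing_set (T : finType) (e : rel T) (S : {set T}) :=
  reach (psd_step e) S setT.

(* The special distance-2 graph SD_2(T): vertex set W = V(T) \ B0, with u ~ w
   iff u <> w and they have a common neighbour in T. *)
Notation SD2_vertex B0 := {x | x \notin B0}.
Definition SD2 (T : finType) (e : rel T) (B0 : {set T}) : rel (SD2_vertex B0) :=
  fun u w => (val u != val w) && [exists x, e (val u) x && e (val w) x].
Arguments SD2 {T} e B0 _ _.

From mathcomp Require Import all_boot.
Set Implicit Arguments. Unset Strict Implicit. Unset Printing Implicit Defensive.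

(* Once skew forcing from the empty set has stalled at B0, no two white
   vertices of the tree are adjacent: a white vertex with a white neighbour
   would have a second one, giving white paths of unbounded length.  Hence
   SD2-adjacent vertices share a neighbour in B0, and forces translate both
   ways.  A PSD force w -> v of SD2 through a common neighbour x is a skew
   force x -> v of T, since any other white neighbour of x is SD2-adjacent to
   w and to v.  A skew force u -> v with v white has u in B0, and u has a
   second white neighbour w, already blue; w then PSD-forces v, because a
   second candidate in the component of v would join u to another neighbour
   of w avoiding w, closing a cycle. *)

Lemma reach_trans (A : finType) (R : {set A} -> {set A} -> Prop) X Y Z :
  reach R X Y -> reach R Y Z -> reach R X Z.
Proof. by elim=> // B B' B'' st _ IH /IH; apply: reach_cons. Qed.

Lemma reach_simulation (A A' : finType) (R : {set A} -> {set A} -> Prop)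
    (R' : {set A'} -> {set A'} -> Prop) (sim : {set A} -> {set A'} -> Prop) :
    (forall X X' Y, R X X' -> sim X Y ->
       exists2 Y', reach R' Y Y' & sim X' Y') ->
  forall X X' Y, reach R X X' -> sim X Y ->
    exists2 Y', reach R' Y Y' & sim X' Y'.
Proof.
move=> sim_step X X' Y r; elim: r Y => [B|B B1 B2 st _ IH] Y simBY.
  by exists Y; first exact: reach_refl.
have [Y1 rY1 sim1] := sim_step _ _ _ st simBY.
have [Y2 rY2 sim2] := IH _ sim1.
by exists Y2 => //; apply: reach_trans rY1 rY2.
Qed.

Lemma homo_connect (A A' : finType) (e : rel A) (e' : rel A') (f : A -> A') :
    {homo f : x y / e x y >-> connect e' x y} ->
  {homo f : x y / connect e x y >-> connect e' x y}.
Proof.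
move=> fe x _ /connectP[p ep ->]; elim: p x ep => //= y p IHp x /andP[exy].
by move/IHp; apply: connect_trans; apply: fe.
Qed.

Section Forcing.

Variables (T : finType) (e : rel T).

Lemma skew_forceP (B : {set T}) u v :
  reflect [/\ e u v, v \notin B & forall w, e u w -> w \notin B -> w = v]
          (skew_force e B u v).
Proof.
apply: (iffP eqP) => [fuv | [euv vB uniq_v]].
  have: v \in [set w | e u w & w \notin B] by rewrite fuv set11.
  rewrite inE => /andP[euv vB]; split=> // w euw wB.
  by apply/set1P; rewrite -fuv inE euw.
apply/setP => w; rewrite !inE.
by apply/andP/eqP => [[euw /(uniq_v w euw)] | ->].
Qed.

Lemma psd_forceP (B : {set T}) u v :
  reflect [/\ u \in B, v \notin B, e u v &
           forall w, e u w -> w \notin B -> white_conn e B v w -> w = v]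
          (psd_force e B u v).
Proof.
apply: (iffP and3P) => [[uB vB /eqP fuv] | [uB vB euv uniq_v]].
  have: v \in [set w | [&& e u w, w \notin B & white_conn e B v w]].
    by rewrite fuv set11.
  rewrite inE => /andP[euv _]; split=> // w euw wB cvw.
  by apply/set1P; rewrite -fuv inE euw wB.
split=> //; apply/eqP/setP => w; rewrite !inE.
apply/and3P/eqP => [[euw wB /(uniq_v w euw wB)] // | ->].
by split=> //; apply: connect0.
Qed.

Lemma skew_reach_subset X X' : reach (skew_step e) X X' -> X \subset X'.
Proof.
elim=> // X0 X1 X2 [u [v [_ ->]]] _.
by apply: subset_trans; apply: subsetUr.
Qed.

Lemma skew_reach_mono X X' (Y : {set T}) :
  reach (skew_step e) X X' -> X \subset Y ->
  exists2 Y', reach (skew_step e) Y Y' & X' \subset Y'.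
Proof.
apply: (@reach_simulation _ _ _ _ (fun X Y : {set T} => X \subset Y)).
move=> {}X {}X' {}Y [u [v [/skew_forceP[euv vX uniq_v] ->]]] XY.
have [vY | vY] := boolP (v \in Y).
  by exists Y; [apply: reach_refl | rewrite subUset sub1set vY].
exists (v |: Y); last exact: setUS.
apply: reach_cons (reach_refl _ _); exists u, v; split=> //.
apply/skew_forceP; split=> // w euw wY.
by apply: uniq_v euw _; apply: contra wY; apply: (subsetP XY).
Qed.

End Forcing.

Definition skew_stalled (T : finType) (e : rel T) (B : {set T}) :=
  forall u v, ~ skew_force e B u v.

Definition SD2_part (T : finType) (B0 X : {set T}) : {set SD2_vertex B0} :=
  [set x | val x \in X].

Lemma SD2_partS (T : finType) (B0 X X' : {set T}) :
  X \subset X' -> SD2_part B0 X \subset SD2_part B0 X'.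
Proof. by move=> XX'; apply/subsetP => x; rewrite !inE => /(subsetP XX'). Qed.

Section Tree.

Variables (T : finType) (e : rel T).
Hypothesis tree : is_tree e.

Let esym : symmetric e. Proof. by case: tree => -[]. Qed.
Let eirr : irreflexive e. Proof. by case: tree => -[]. Qed.

Lemma tree_path_unclosed a p :
  path e a p -> uniq (a :: p) -> 1 < size p -> ~~ e (last a p) a.
Proof.
move=> pth un sz; apply/negP => closing; case: tree => _ _ _ /(_ (a :: p) sz).
by rewrite /cycle rcons_path pth closing un.
Qed.

Lemma tree_nbrs_disconnected w a c :
  e w a -> e w c -> a != c -> ~~ white_conn e [set w] a c.
Proof.
move=> ewa ewc ac; apply/negP => /connectP[p0 pp0 lp0].
case: (shortenP pp0) lp0 => p pp up _ lp {p0 pp0}.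
have p_nil : p != [::] by case: p {pp up} lp => //= ca; rewrite ca eqxx in ac.
have aw : a != w by apply: contraTneq ewa => ->; rewrite eirr.
have wp : w \notin p.
  elim: p {up lp p_nil} (a) pp => // y p IH x /= /andP[/and3P[_ _ yw] /IH].
  by rewrite inE negb_or eq_sym -in_set1 yw.
have: e (last w (a :: p)) w by rewrite /= -lp esym.
apply/negP/tree_path_unclosed; last by case: p p_nil {pp up lp wp}.
  by rewrite /= ewa; apply: sub_path pp => x y /and3P[].
by rewrite cons_uniq up andbT inE negb_or eq_sym aw.
Qed.

Section Stalled.

Variable B0 : {set T}.
Hypothesis stalled : skew_stalled e B0.

Lemma stalled_second_white_nbr y y' :
  e y y' -> y' \notin B0 -> exists2 z, e y z & (z \notin B0) && (z != y').
Proof.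
move=> eyy' y'B; case: (pickP [pred z | [&& e y z, z \notin B0 & z != y']]).
  by move=> z /and3P[eyz zB zy']; exists z; rewrite // zB.
move=> none; case: (@stalled y y'); apply/skew_forceP; split=> // z eyz zB.
by apply/eqP; move: (none z); rewrite /= eyz zB => /negbFE.
Qed.

Lemma stalled_white_path_extend y y' p :
  path e y (y' :: p) -> uniq (y :: y' :: p) -> y \notin B0 -> y' \notin B0 ->
  exists2 z, e z y & (z \notin B0) && (z \notin y :: y' :: p).
Proof.
move=> pth un yB y'B; have eyy' : e y y' by case/andP: pth.
have [z eyz /andP[zB zy']] := stalled_second_white_nbr eyy' y'B.
exists z; first by rewrite esym.
rewrite zB; apply/negP; rewrite !inE (negbTE zy') => /orP[/eqP zy | zp].
  by move: eyz; rewrite zy eirr.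
case/splitPr: zp pth un => p1 p2.
rewrite -cat_rcons -!cat_cons cat_path cat_uniq => /andP[pth _] /andP[un _].
have := tree_path_unclosed pth un; rewrite /= last_rcons size_rcons esym eyz.
by move/(_ isT).
Qed.

Lemma stalled_white_nbrs_blue u v : e u v -> u \notin B0 -> v \in B0.
Proof.
move=> euv uB; apply/negPn/negP => vB.
have grow n : exists y y' p, [/\ path e y (y' :: p), uniq (y :: y' :: p),
    y \notin B0, y' \notin B0 & size p = n].
  elim: n => [|n [y [y' [p [pth un yB y'B <-]]]]].
    exists u, v, [::]; split=> //=; first by rewrite euv.
    by rewrite inE andbT; apply: contraTneq euv => ->; rewrite eirr.
  have [z ezy /andP[zB zn]] := stalled_white_path_extend pth un yB y'B.
  by exists z, y, (y' :: p); split=> //; [apply/andP | rewrite cons_uniq zn].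
have [y [y' [p [_ un _ _ sz]]]] := grow #|T|.
move: (max_card (mem (y :: y' :: p))); rewrite (card_uniqP un) /= sz.
by rewrite ltnNge leqnSn.
Qed.

Lemma SD2_common_blue_nbr (x y : SD2_vertex B0) :
  SD2 e B0 x y -> exists c, [/\ e (val x) c, e (val y) c & c \in B0].
Proof.
case/andP=> _ /existsP[c /andP[exc eyc]]; exists c; split=> //.
exact: stalled_white_nbrs_blue exc (valP x).
Qed.

Lemma SD2_white_conn_lift (Z : {set SD2_vertex B0}) w x y :
  w \in Z -> white_conn (SD2 e B0) Z x y ->
  white_conn e [set val w] (val x) (val y).
Proof.
move=> wZ; apply: homo_connect => {}x {}y /and3P[sxy xZ yZ].
have [c [exc eyc cB]] := SD2_common_blue_nbr sxy.
have notw (t : SD2_vertex B0) : t \notin Z -> val t \notin [set val w].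
  by move=> tZ; rewrite inE; apply: contraNneq tZ => /val_inj ->.
have cw : c \notin [set val w].
  by rewrite inE; apply: contraTneq cB => ->; exact: (valP w).
apply: (connect_trans (y := c)); apply: connect1.
  by rewrite exc notw.
by rewrite esym eyc cw notw.
Qed.

Lemma skew_simulated_by_SD2_psd (X X' : {set T}) (Z : {set SD2_vertex B0}) :
  reach (skew_step e) X X' -> SD2_part B0 X \subset Z ->
  exists2 Z', reach (psd_step (SD2 e B0)) Z Z' & SD2_part B0 X' \subset Z'.
Proof.
apply: (@reach_simulation _ _ _ _ (fun X Z => SD2_part B0 X \subset Z)).
move=> {}X _ {}Z [u [v [/skew_forceP[euv vX uniq_v] ->]]] XZ.
have [|/subsetPn[v' v'X v'Z]] := boolP (SD2_part B0 (v |: X) \subset Z).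
  by exists Z; first exact: reach_refl.
have vv' : val v' = v.
  move: v'X; rewrite !inE => /orP[/eqP // | v'X].
  by rewrite (subsetP XZ) ?inE in v'Z.
subst v; exists (v' |: Z); last first.
  apply/subsetP => y; rewrite !inE => /orP[/eqP/val_inj -> | yX].
    by rewrite eqxx.
  by rewrite (subsetP XZ) ?orbT ?inE.
have uB : u \in B0 by apply: stalled_white_nbrs_blue (valP v'); rewrite esym.
have [w euw /andP[wB wv']] := stalled_second_white_nbr euv (valP v').
have wX : w \in X by apply: contraNT wv' => wX; rewrite (uniq_v w euw wX).
pose w' : SD2_vertex B0 := exist _ w wB.
have w'Z : w' \in Z by rewrite (subsetP XZ) ?inE.
apply: reach_cons (reach_refl _ _); exists w', v'; split=> //.
apply/psd_forceP; split=> //.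
  by rewrite /SD2 wv'; apply/existsP; exists u; rewrite esym euw esym euv.
move=> z /andP[_ /existsP[b /andP[ewb ezb]]] zZ cvz.
have [ub | ub] := eqVneq u b.
  apply/val_inj/uniq_v; first by rewrite esym ub.
  by apply: contra zZ => zX; rewrite (subsetP XZ) ?inE.
have bB : b \in B0 := stalled_white_nbrs_blue ewb wB.
have blue_not_w t : t \in B0 -> t \notin [set w].
  by move=> tB; rewrite inE; apply: contraTneq tB => ->.
have ewu : e w u by rewrite esym.
case/negP: (tree_nbrs_disconnected ewu ewb ub).
apply: (connect_trans (y := val v')).
  by apply: connect1; rewrite euv (blue_not_w u uB) inE eq_sym wv'.
apply: (connect_trans (SD2_white_conn_lift w'Z cvz)); apply: connect1.
rewrite ezb (blue_not_w b bB) andbT inE; apply: contraNneq zZ => zw.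
by rewrite (_ : z = w') //; apply: val_inj.
Qed.

End Stalled.

End Tree.

Lemma SD2_psd_simulated_by_skew (T : finType) (e : rel T) (B0 : {set T})
    (Y Y' : {set SD2_vertex B0}) (X : {set T}) :
  symmetric e ->
  reach (psd_step (SD2 e B0)) Y Y' -> B0 \subset X /\ Y \subset SD2_part B0 X ->
  exists2 X', reach (skew_step e) X X' &
    B0 \subset X' /\ Y' \subset SD2_part B0 X'.
Proof.
move=> esym; apply: (@reach_simulation _ _ _ _
  (fun Y X => B0 \subset X /\ Y \subset SD2_part B0 X)).
move=> {}Y _ {}X [w [v [/psd_forceP[wY vY swv uniq_v] ->]]] [B0X YX].
have [vX | vX] := boolP (val v \in X).
  by exists X; [exact: reach_refl | rewrite subUset sub1set inE vX].
exists (val v |: X); last first.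
  rewrite (subset_trans B0X) ?subsetUr // subUset sub1set inE setU11.
  by rewrite (subset_trans YX) ?SD2_partS ?subsetUr.
have [x /andP[ewx evx]] := existsP (proj2 (andP swv)).
apply: reach_cons (reach_refl _ _); exists x, (val v); split=> //.
apply/skew_forceP; split=> [|//|t ext tX]; first by rewrite esym.
have [-> // | tv] := eqVneq t (val v).
have tB : t \notin B0 by apply: contra tX; apply: subsetP.
have t'Y : exist _ t tB \notin Y.
  by apply: contra tX => /(subsetP YX); rewrite inE.
suff /(congr1 val) : exist _ t tB = v by [].
apply: uniq_v => //.
  apply/andP; split; last by apply/existsP; exists x; rewrite ewx esym ext.
  by apply: contraNneq tX => /= <-; move/subsetP: YX => /(_ w wY); rewrite inE.
apply: connect1; rewrite /SD2 eq_sym tv vY t'Y /= andbT.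
by apply/existsP; exists x; rewrite evx esym ext.
Qed.

Theorem theorem6p6 (T : finType) (e : rel T) (B0 : {set T}) :
  is_tree e -> skew_final e B0 -> skew_nontrivial e B0 ->
  forall S : {set T}, S \subset ~: B0 ->
  (psd_forcing_set (SD2 e B0) [set x : SD2_vertex B0 | val x \in S]
   <-> skew_forcing_set e S).
Proof.
move=> tree [B0_reached stalled] _ S _; have [[esym _] _ _ _] := tree.
split=> [psd | skew].
- have [Y0 S_Y0 B0_Y0] := skew_reach_mono B0_reached (sub0set S).
  have [X' Y0_X' [B0_X' W_X']] := SD2_psd_simulated_by_skew esym psd
    (conj B0_Y0 (SD2_partS B0 (skew_reach_subset S_Y0))).
  suff X'T : X' = setT.
    by rewrite /skew_forcing_set -X'T; apply: reach_trans S_Y0 Y0_X'.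
  apply/setP => t; rewrite inE.
  have [/(subsetP B0_X') // | tB] := boolP (t \in B0).
  by move/subsetP: W_X' => /(_ (exist _ t tB)); rewrite !inE; apply.
- have [Z' S_Z' W_Z'] := skew_simulated_by_SD2_psd tree stalled skew (subxx _).
  suff Z'T : Z' = setT by rewrite /psd_forcing_set -Z'T.
  by apply/setP => x; rewrite inE (subsetP W_Z') ?inE.
Qed.
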